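(* There is a constant $C>0$ such that for every integer $n\ge 1$, every graph on $n$ vertices has at most $C\cdot \rho^n\cdot n$ minimal separators, where $\rho = \frac{1+\sqrt{5}}{2}$ is the golden ratio. That is, $\mathrm{sep}(n) = O(\rho^n\cdot n)$.
   Context: All graphs are finite and simple. For a graph $G=(V,E)$ and two vertices $a,b\in V$, a set $S\subseteq V\setminus\{a,b\}$ is an $(a,b)$-separator if $a$ and $b$ lie in different connected components of $G-S$ (the graph obtained by deleting the vertices of $S$). An $(a,b)$-separator is minimal if no proper subset of it is an $(a,b)$-separator. A set $S\subset V$ is a minimal separator of $G$ if it is a minimal $(a,b)$-separator for some pair of distinct vertices $a,b\in V$. $\mathrm{sep}(n)$ denotes the maximum, over all graphs on $n$ vertices, of the number of minimal separators of the graph. *)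

From mathcomp Require Import all_boot.
From Stdlib Require Import Reals.

Set Implicit Arguments.
Unset Strict Implicit.
Unset Printing Implicit Defensive.

Definition simple_graph (T : finType) (e : rel T) : Prop :=
  symmetric e /\ irreflexive e.

Definition del_rel (T : finType) (e : rel T) (S : {set T}) : rel T :=
  [rel x y | [&& e x y, x \notin S & y \notin S]].

Definition is_sep (T : finType) (e : rel T) (a b : T) (S : {set T}) : bool :=
  [&& a \notin S, b \notin S & ~~ connect (del_rel e S) a b].

Definition is_min_sep (T : finType) (e : rel T) (a b : T) (S : {set T}) : bool :=
  is_sep e a b S && [forall S' : {set T}, (S' \proper S) ==> ~~ is_sep e a b S'].

Definition is_minimal_separator (T : finType) (e : rel T) (S : {set T}) : bool :=
  [exists a : T, exists b : T, (a != b) && is_min_sep e a b S].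

Definition num_min_seps (T : finType) (e : rel T) : nat :=
  #|[set S : {set T} | is_minimal_separator e S]|.

Definition golden_ratio : R := ((1 + sqrt 5) / 2)%R.

(** Every minimal (a,b)-separator S of a graph is the neighbourhood of each of
    the two full components of G - S containing a and b; the smaller of them,
    C, satisfies 2|C| + |S| <= n.  Such connected sets C containing a fixed
    vertex v are enumerated by a branching process: pick a neighbour u of the
    current set X that is not yet forbidden, and either add u to X (which
    costs 2 from the budget 2|X| + |Y| <= n) or forbid it (which costs 1).
    The number of leaves is therefore bounded by a Fibonacci number, hence by
    rho^n, and summing over the n choices of v gives n rho^n. *)

From mathcomp Require Import all_boot zify.
From Stdlib Require Import Reals Lra Psatz.

Set Implicit Arguments.
Unset Strict Implicit.
Unset Printing Implicit Defensive.

Lemma connect_closed_in (T : finType) (r : rel T) (A : {set T}) a w :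
  a \in A -> (forall x y, x \in A -> r x y -> y \in A) ->
  connect r a w -> w \in A.
Proof.
move=> aA clA /connectP [p pth ->].
elim: p a aA pth => [|y p IH] x xA //= /andP [rxy pth].
exact: IH (clA _ _ xA rxy) pth.
Qed.

(* Shifted indexing: [fib 0 = fib 1 = 1]. *)
Fixpoint fib (n : nat) : nat :=
  if n is n'.+1 then (if n' is n''.+1 then fib n' + fib n'' else 1) else 1.

Lemma fibSS n : fib n.+2 = fib n.+1 + fib n.
Proof. by []. Qed.

Lemma fib_gt0 n : 0 < fib n.
Proof.
elim/ltn_ind: n => -[|[|n]] IH //.
by rewrite fibSS addn_gt0 IH.
Qed.

Section BranchSets.
Variables (T : finType) (e : rel T).
Implicit Types (X Y C Z S : {set T}) (u v w : T).

Definition nbhd C : {set T} := [set w | (w \notin C) && [exists x in C, e x w]].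

Definition rooted_connected v C : bool :=
  [forall Z : {set T}, ((v \in Z) && (Z \proper C)) ==>
     [exists x in Z, exists y in C :\: Z, e x y]].

Definition branch_sets v X Y : {set {set T}} :=
  [set C : {set T} | [&& X \subset C, [disjoint C & Y], rooted_connected v C &
              2 * #|C| + #|nbhd C :|: Y| <= #|T|]].

Lemma branch_sets_eq0 v X Y : #|T| < 2 * #|X| + #|Y| -> branch_sets v X Y = set0.
Proof.
move=> ltTXY; apply/setP=> C; rewrite !inE.
apply/negP=> /and4P [/subset_leq_card XC _ _ budget].
have : #|Y| <= #|nbhd C :|: Y| by rewrite subset_leq_card ?subsetUr.
lia.
Qed.

Lemma branch_sets_leaf v X Y :
  v \in X -> nbhd X \subset Y -> branch_sets v X Y \subset [set X].
Proof.
move=> vX NXY; apply/subsetP=> C; rewrite !inE => /and4P [XC dCY connC _].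
apply/eqP/esym/eqP/negPn/negP=> neqXC.
have /existsP [x /andP [xX /existsP [y]]] :
    [exists x in X, exists y in C :\: X, e x y].
  by move/forallP: connC => /(_ X); rewrite vX properEneq neqXC XC.
rewrite inE => /andP [/andP [yX yC] exy].
have yY : y \in Y.
  by apply: (subsetP NXY); rewrite inE yX; apply/existsP; exists x; rewrite xX.
by move/pred0P: dCY => /(_ y); rewrite /= yC yY.
Qed.

Lemma branch_sets_split v X Y u : u \in nbhd X -> u \notin Y ->
  branch_sets v X Y \subset branch_sets v (u |: X) Y :|: branch_sets v X (u |: Y).
Proof.
move=> uNX uY; apply/subsetP=> C; rewrite !inE => /and4P [XC dCY connC budget].
case uC: (u \in C); first by rewrite subUset sub1set uC XC dCY connC budget.
have uNC : u \in nbhd C.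
  move: uNX; rewrite !inE uC => /andP [_ /existsP [x /andP [xX exu]]].
  by apply/existsP; exists x; rewrite (subsetP XC _ xX).
apply/orP; right.
have -> : nbhd C :|: (u |: Y) = nbhd C :|: Y.
  by rewrite setUCA (setUidPr _) // sub1set inE uNC.
rewrite XC connC budget !andbT.
apply/pred0P=> w /=; rewrite !inE.
case: eqP => [-> | _]; first by rewrite uC.
by move/pred0P: dCY => /(_ w).
Qed.

Lemma card_branch_sets s v X Y : v \in X -> #|T| <= 2 * #|X| + #|Y| + s ->
  #|branch_sets v X Y| <= fib s.
Proof.
elim/ltn_ind: s X Y => s IH X Y vX budget.
have [NXY | [u]] := set_0Vmem (nbhd X :\: Y).
  apply: leq_trans (subset_leq_card (branch_sets_leaf vX _)) _.
    by rewrite -setD_eq0 NXY.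
  by rewrite cards1 fib_gt0.
rewrite inE => /andP [uY uNX].
have uX : u \notin X by move: uNX; rewrite inE => /andP [].
have vuX : v \in u |: X by rewrite inE vX orbT.
have cardX : #|u |: X| = #|X|.+1 by rewrite cardsU1 uX.
have cardY : #|u |: Y| = #|Y|.+1 by rewrite cardsU1 uY.
apply: leq_trans (subset_leq_card (branch_sets_split v uNX uY)) _.
apply: leq_trans (leq_card_setU _ _) _.
case: s IH budget => [|[|s]] IH budget.
- by rewrite !branch_sets_eq0 ?cards0 //; lia.
- rewrite [branch_sets v (u |: X) Y]branch_sets_eq0; last by lia.
  by rewrite cards0 (IH 0) //; lia.
- have := IH s _ (u |: X) Y vuX; have := IH s.+1 _ X (u |: Y) vX.
  rewrite fibSS; lia.
Qed.

Lemma card_branch_sets1 v : #|branch_sets v [set v] set0| <= fib #|T|.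
Proof. by apply: card_branch_sets; rewrite ?set11 ?cards1 ?cards0 //; lia. Qed.

Section Components.
Variable S : {set T}.

Definition comp a : {set T} := [set w | connect (del_rel e S) a w].

Lemma mem_comp a : a \in comp a.
Proof. by rewrite inE connect0. Qed.

Lemma comp_disjoint a : a \notin S -> [disjoint comp a & S].
Proof.
move=> aS; have compS w : w \in comp a -> w \in ~: S.
  rewrite inE; apply: connect_closed_in; first by rewrite inE.
  by move=> x y _; rewrite inE => /and3P [].
apply/pred0P=> w /=; apply/negbTE; rewrite negb_and.
by case: (boolP (w \in comp a)) => //= /compS; rewrite inE.
Qed.

Lemma connect_comp a x y : x \in comp a -> del_rel e S x y -> y \in comp a.
Proof. by rewrite !inE => ax /connect1; apply: connect_trans. Qed.

Lemma comp_rooted_connected a : rooted_connected a (comp a).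
Proof.
apply/forallP=> Z; apply/implyP=> /andP [aZ ZC].
apply/contraT=> noEdge.
have CZ : comp a \subset Z.
  apply/subsetP=> w; rewrite inE; apply: connect_closed_in aZ _ => x y xZ rxy.
  have xC := subsetP (proper_sub ZC) x xZ.
  apply: (contraNT _ noEdge) => yZ; apply/existsP; exists x; rewrite xZ.
  apply/existsP; exists y; rewrite in_setD yZ (connect_comp xC rxy).
  by move: rxy => /and3P [].
by move: ZC; rewrite properE CZ andbF.
Qed.

Lemma nbhd_comp_sub a : a \notin S -> nbhd (comp a) \subset S.
Proof.
move=> aS; apply/subsetP=> w; rewrite inE => /andP [wC /existsP [x /andP [xC exw]]].
apply: contraNT wC => wS; apply: (connect_comp xC).
by rewrite /del_rel /= exw wS (disjointFr (comp_disjoint aS) xC).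
Qed.

Lemma nbhd_comp a b : a \notin S -> ~~ connect (del_rel e S) a b ->
  (forall s, s \in S -> connect (del_rel e (S :\ s)) a b) -> nbhd (comp a) = S.
Proof.
move=> aS nab conn_del1; apply/eqP; rewrite eqEsubset nbhd_comp_sub //=.
apply/subsetP=> w wS; rewrite inE (disjointFl (comp_disjoint aS) wS) /=.
apply: contraT => noEdge.
have : b \in comp a.
  apply: connect_closed_in (mem_comp a) _ (conn_del1 w wS).
  move=> x y xC /and3P [exy _ yS'].
  have [yw | ynw] := eqVneq y w.
    move: noEdge; rewrite -yw; apply: contraR => _.
    by apply/existsP; exists x; rewrite xC.
  apply: (connect_comp xC); move: yS'; rewrite in_setD1 ynw /= => yS.
  by rewrite /del_rel /= exy yS (disjointFr (comp_disjoint aS) xC).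
by rewrite inE (negbTE nab).
Qed.

End Components.

Lemma del_rel_sym S : symmetric e -> symmetric (del_rel e S).
Proof.
by move=> e_sym x y; rewrite /del_rel /= e_sym; congr (_ && _); apply: andbC.
Qed.

Lemma is_sep_sym a b S : symmetric e -> is_sep e a b S = is_sep e b a S.
Proof.
move=> e_sym; rewrite /is_sep andbA [(a \notin S) && _]andbC -andbA.
by rewrite (sym_connect_sym (del_rel_sym S e_sym)).
Qed.

Lemma is_min_sep_sym a b S : symmetric e -> is_min_sep e a b S = is_min_sep e b a S.
Proof.
move=> e_sym; rewrite /is_min_sep is_sep_sym //; congr (_ && _).
by apply: eq_forallb => S'; rewrite is_sep_sym.
Qed.

Lemma min_sep_connect_del1 a b S s :
  is_min_sep e a b S -> s \in S -> connect (del_rel e (S :\ s)) a b.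
Proof.
case/andP=> /and3P [aS bS _] /forallP /(_ (S :\ s)) minS sS.
move: minS; rewrite properD1 //= /is_sep !inE.
by rewrite (negbTE aS) (negbTE bS) !andbF => /negbNE.
Qed.

Lemma nbhd_comp_min_sep a b S : is_min_sep e a b S -> nbhd (comp S a) = S.
Proof.
move=> minS; case/andP: (minS) => /and3P [aS _ nab] _.
by apply: nbhd_comp aS nab _ => s; apply: min_sep_connect_del1.
Qed.

Lemma card_comps_sep a b S : symmetric e -> is_sep e a b S ->
  #|comp S a| + #|comp S b| + #|S| <= #|T|.
Proof.
move=> e_sym /and3P [aS bS nab].
have cardU (A B : {set T}) : [disjoint A & B] -> #|A :|: B| = #|A| + #|B|.
  by move=> dAB; apply/eqP; rewrite (leq_card_setU A B).2.
have dab : [disjoint comp S a & comp S b].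
  apply/pred0P=> w /=; rewrite !inE; apply: contraNF nab => /andP [aw bw].
  by apply: connect_trans aw _; rewrite (sym_connect_sym (del_rel_sym S e_sym)).
have dabS : [disjoint comp S a :|: comp S b & S].
  apply/pred0P=> w /=; rewrite in_setU.
  have [wS | _] := boolP (w \in S); last by rewrite andbF.
  by rewrite (disjointFl (comp_disjoint aS) wS) (disjointFl (comp_disjoint bS) wS).
by rewrite -(cardU _ _ dab) -(cardU _ _ dabS) max_card.
Qed.

Lemma min_sep_comp_branch a b S : symmetric e -> is_min_sep e a b S ->
  #|comp S a| <= #|comp S b| -> comp S a \in branch_sets a [set a] set0.
Proof.
move=> e_sym minS small; case/andP: (minS) => sepS _.
have := card_comps_sep e_sym sepS.
rewrite inE sub1set mem_comp comp_rooted_connected setU0 (nbhd_comp_min_sep minS).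
by rewrite -setI_eq0 setI0 eqxx /=; lia.
Qed.

Lemma min_sep_nbhd_branch S : symmetric e -> is_minimal_separator e S ->
  exists v, exists2 C, C \in branch_sets v [set v] set0 & S = nbhd C.
Proof.
move=> e_sym /existsP [a /existsP [b /andP [_ minS]]].
wlog small : a b minS / #|comp S a| <= #|comp S b|.
  move=> wlog_small; have [|/ltnW] := leqP #|comp S a| #|comp S b|.
    exact: wlog_small.
  by apply: wlog_small; rewrite -is_min_sep_sym.
exists a; exists (comp S a); first exact: min_sep_comp_branch minS small.
by rewrite (nbhd_comp_min_sep minS).
Qed.

Lemma num_min_seps_le : symmetric e -> num_min_seps e <= #|T| * fib #|T|.
Proof.
move=> e_sym.
have sub : [set S | is_minimal_separator e S] \subset
           \bigcup_(v : T) (nbhd @: branch_sets v [set v] set0).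
  apply/subsetP=> S; rewrite inE => /(min_sep_nbhd_branch e_sym) [v [C CF ->]].
  by apply/bigcupP; exists v => //; apply: imset_f.
rewrite /num_min_seps; apply: leq_trans (subset_leq_card sub) _.
rewrite -sum_nat_const.
apply: (big_ind2 (fun (X : {set {set T}}) n => #|X| <= n)).
- by rewrite cards0.
- by move=> X1 n1 X2 n2 h1 h2; apply: leq_trans (leq_card_setU _ _) _; lia.
- by move=> v _; apply: leq_trans (leq_imset_card _ _) (card_branch_sets1 v).
Qed.

End BranchSets.

Lemma golden_ratio_sq : (golden_ratio ^ 2 = golden_ratio + 1)%R.
Proof. rewrite /golden_ratio; have := sqrt_sqrt 5; lra. Qed.

Lemma golden_ratio_ge1 : (1 <= golden_ratio)%R.
Proof. rewrite /golden_ratio; have := sqrt_pos 5; have := sqrt_sqrt 5; nra. Qed.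

Lemma golden_ratio_powSS n :
  (golden_ratio ^ n.+2 = golden_ratio ^ n.+1 + golden_ratio ^ n)%R.
Proof.
have := golden_ratio_sq; rewrite /= Rmult_1_r => sq.
by rewrite -Rmult_assoc sq; ring.
Qed.

Lemma fib_le_golden_ratio_pow n : (INR (fib n) <= golden_ratio ^ n)%R.
Proof.
elim/ltn_ind: n => -[|[|n]] IH; first by rewrite /=; lra.
  by rewrite /= Rmult_1_r; apply: golden_ratio_ge1.
rewrite fibSS plus_INR golden_ratio_powSS.
by apply: Rplus_le_compat; apply: IH.
Qed.

Theorem theorem1 :
  exists C : R, (0 < C)%R /\
    forall (n : nat) (e : rel 'I_n), (1 <= n)%N -> simple_graph e ->
      (INR (num_min_seps e) <= C * golden_ratio ^ n * INR n)%R.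
Proof.
exists 1%R; split; first lra.
move=> n e _ [e_sym _].
have := num_min_seps_le e_sym; rewrite card_ord => /leP /le_INR.
rewrite mult_INR Rmult_1_l Rmult_comm => /Rle_trans; apply.
apply: Rmult_le_compat_r; [exact: pos_INR | exact: fib_le_golden_ratio_pow].
Qed.
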